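(* For any integers $n \ge k \ge 1$ and any positive integers $n_1 \le n_2 \le \cdots \le n_k$ with $n_1 + \cdots + n_k = n$, the graph $G(n_1,\ldots,n_k)$ has exactly $kn - \binom{k+1}{2}$ edges.
   Context: The graph $G(n_1,\ldots,n_k)$: for each $1 \le i \le k$ it contains a path on distinct vertices $v_{i,1},\ldots,v_{i,n_i}$ (edges $v_{i,a}v_{i,a+1}$ for $1 \le a < n_i$), with all $n$ vertices distinct, and additionally, for each $1 \le i < j \le k$, the following edges: (i) if $n_i > 1$, the edge $v_{i,a}v_{j,a}$ for each $1 \le a < n_i$; (ii) if $n_j > 1$, the edge $v_{i,a+1}v_{j,a}$ for each $1 \le a < n_i$; (iii) the edge $v_{i,n_i}v_{j,a}$ for each $n_i \le a \le n_j$. These are all the edges. *)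

From mathcomp Require Import all_boot.
Set Implicit Arguments. Unset Strict Implicit. Unset Printing Implicit Defensive.

(* The graph G(n_1,...,n_k).  Indices are 1-based as in the paper:
   [ns i] is n_i for 1 <= i <= k, and vertex v_{i,a} is the pair (i, a)
   with 1 <= i <= k and 1 <= a <= n_i. *)

Definition is_vtx (k : nat) (ns : nat -> nat) (v : nat * nat) : bool :=
  (1 <= v.1 <= k) && (1 <= v.2 <= ns v.1).

(* [G_adj k ns u v]: {u, v} is one of the listed edges, with u playing the
   role of the first-written endpoint. *)
Definition G_adj (k : nat) (ns : nat -> nat) (u v : nat * nat) : bool :=
  let i := u.1 in let a := u.2 in let j := v.1 in let b := v.2 in
  [|| (* path edges v_{i,a} v_{i,a+1}, 1 <= a < n_i *)
      [&& i == j, b == a.+1 & 1 <= a < ns i],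
      (* (i) i < j, n_i > 1 : v_{i,a} v_{j,a}, 1 <= a < n_i *)
      [&& i < j, 1 < ns i, b == a & 1 <= a < ns i],
      (* (ii) i < j, n_j > 1 : v_{i,a+1} v_{j,a}, 1 <= a < n_i *)
      [&& i < j, 1 < ns j, a == b.+1 & 1 <= b < ns i] |
      (* (iii) i < j : v_{i,n_i} v_{j,b}, n_i <= b <= n_j *)
      [&& i < j, a == ns i & ns i <= b <= ns j]].

(* Vertex carrier: pairs (i, a) with i <= k, a <= n (where n = sum of n_i). *)
Definition Gvert (k n : nat) := ('I_k.+1 * 'I_n.+1)%type.

Definition Gv (k n : nat) (x : Gvert k n) : nat * nat :=
  (nat_of_ord x.1, nat_of_ord x.2).

Definition G_edges (k n : nat) (ns : nat -> nat) : {set {set Gvert k n}} :=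
  [set e : {set Gvert k n} |
     [exists u : Gvert k n, exists v : Gvert k n,
        [&& e == [set u; v], u != v, is_vtx k ns (Gv u), is_vtx k ns (Gv v)
          & G_adj k ns (Gv u) (Gv v)]]].

From mathcomp Require Import all_boot zify.

(* Every listed edge goes from a lexicographically smaller vertex to a larger
   one, so edges are in bijection with ordered adjacent pairs, which we count
   path by path.  Path i carries n_i - 1 edges; for i < j the families (i),
   (ii) and (iii) are disjoint and carry n_i - 1, n_i - 1 and n_j - n_i + 1
   edges, i.e. n_i + n_j - 1 in total.  Summing gives
   (n - k) + (k - 1) n - C(k, 2) = k n - C(k + 1, 2). *)

Section AsymmetricRelation.

Variables (T : finType) (r : rel T).
Hypothesis r_asym : forall {x y}, r x y -> ~~ r y x.

Lemma set2_inj_asym u v u' v' :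
  r u v -> r u' v' -> [set u; v] = [set u'; v'] -> (u, v) = (u', v').
Proof.
move=> ruv ru'v' E; move: ruv.
have := set21 u v; have := set22 u v; rewrite E => /set2P[] -> /set2P[] -> //.
- by move=> ru'u'; have := r_asym ru'u'; rewrite ru'u'.
- by move=> rv'u'; have := r_asym rv'u'; rewrite ru'v'.
- by move=> rv'v'; have := r_asym rv'v'; rewrite rv'v'.
Qed.

Lemma card_set2_asym :
  #|[set e : {set T} | [exists u, exists v, [&& e == [set u; v], u != v & r u v]]]|
    = \sum_u \sum_v r u v.
Proof.
have r_neq x y : r x y -> x != y.
  move=> rxy; apply: contraTneq rxy => ->.
  by apply/negP => ryy; have := r_asym ryy; rewrite ryy.
set S := [set p : T * T | r p.1 p.2].
have -> : [set e : {set T} | [exists u, exists v, [&& e == [set u; v], u != v & r u v]]]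
          = [set [set p.1; p.2] | p in S].
  apply/setP => e; rewrite inE; apply/existsP/imsetP.
  - by case=> u /existsP[v /and3P[/eqP-> _ ruv]]; exists (u, v); rewrite ?inE.
  - case=> -[u v]; rewrite inE /= => ruv ->.
    by exists u; apply/existsP; exists v; rewrite eqxx r_neq.
rewrite card_in_imset => [|[u v] [u' v']]; last first.
  by rewrite !inE; apply: set2_inj_asym.
by rewrite -sum1dep_card big_mkcond pair_bigA.
Qed.

End AsymmetricRelation.

Lemma sum_pair_nat (I J : finType) (F : I * J -> nat) :
  \sum_p F p = \sum_i \sum_j F (i, j).
Proof. by rewrite pair_bigA; apply: eq_bigr => -[]. Qed.

Lemma sum_nat_eq_indicator N c (P : bool) :
  \sum_(0 <= b < N) (P && (b == c) : nat) = P && (c < N).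
Proof.
elim: N => [|N IH]; first by rewrite big_geq //; case: P.
by rewrite big_nat_recr //= IH; lia.
Qed.

Lemma sum_nat_range_indicator N lo hi :
  \sum_(0 <= a < N) (lo <= a < hi : nat) = minn hi N - lo.
Proof.
elim: N => [|N IH]; first by rewrite big_geq //; lia.
by rewrite big_nat_recr //= IH; lia.
Qed.

Lemma sum_nat_graph_indicator N lo hi (f : nat -> nat) :
  hi <= N -> (forall a, lo <= a < hi -> f a < N) ->
  \sum_(0 <= a < N) \sum_(0 <= b < N) ((lo <= a < hi) && (b == f a) : nat) = hi - lo.
Proof.
move=> hiN f_lt; rewrite -[in RHS](minn_idPl hiN) -sum_nat_range_indicator.
apply: eq_bigr => a _; rewrite sum_nat_eq_indicator.
by case: (boolP (lo <= a < hi)) => [/f_lt ->|].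
Qed.

Definition G_rel k ns (u v : nat * nat) : bool :=
  [&& is_vtx k ns u, is_vtx k ns v & G_adj k ns u v].

Definition edges_between k ns N i j : nat :=
  \sum_(0 <= a < N) \sum_(0 <= b < N) G_rel k ns (i, a) (j, b).

Lemma G_adj_lexi k ns u v :
  G_adj k ns u v -> (u.1 < v.1) || (u.1 == v.1) && (u.2 < v.2).
Proof. rewrite /G_adj; lia. Qed.

Lemma G_rel_asym k ns u v : G_rel k ns u v -> ~~ G_rel k ns v u.
Proof.
case/and3P=> _ _ /G_adj_lexi uv; apply/negP => /and3P[_ _ /G_adj_lexi].
by move: uv; lia.
Qed.

Lemma card_G_edges k n ns :
  #|G_edges k n ns| = \sum_(0 <= i < k.+1) \sum_(0 <= j < k.+1) edges_between k ns n.+1 i j.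
Proof.
rewrite (@card_set2_asym _ (fun x y => G_rel k ns (Gv x) (Gv y))) => [|x y]; last first.
  exact: G_rel_asym.
rewrite sum_pair_nat big_mkord; apply: eq_bigr => i _.
under eq_bigr => a _ do rewrite sum_pair_nat.
rewrite exchange_big big_mkord; apply: eq_bigr => j _.
by rewrite /edges_between big_mkord; apply: eq_bigr => a _; rewrite big_mkord.
Qed.

Lemma edges_between_row0 k ns N j : edges_between k ns N 0 j = 0.
Proof. by rewrite /edges_between big1 // => a _; rewrite big1. Qed.

Lemma edges_between_gt k ns N i j : j < i -> edges_between k ns N i j = 0.
Proof.
move=> ji; rewrite /edges_between big1 // => a _; rewrite big1 // => b _.
by apply/eqP; rewrite eqb0; apply/and3P => -[_ _ /G_adj_lexi /=]; lia.
Qed.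

Lemma G_rel_diag k ns i a b :
  1 <= i <= k -> G_rel k ns (i, a) (i, b) = (0 < a < ns i) && (b == a.+1).
Proof. by rewrite /G_rel /is_vtx /G_adj /=; lia. Qed.

Lemma G_rel_lt k ns i j a b :
  0 < i -> i < j -> j <= k -> 0 < ns i <= ns j ->
  G_rel k ns (i, a) (j, b) =
    ((0 < a < ns i) && (b == a) : nat) + ((0 < b < ns i) && (a == b.+1) : nat)
    + ((ns i <= b < (ns j).+1) && (a == ns i) : nat) :> nat.
Proof.
move=> i0 ij jk /andP[x0 xy].
have ik : i <= k by apply: leq_trans (ltnW ij) jk.
rewrite /G_rel /is_vtx /G_adj /= i0 ik (leq_trans i0 (ltnW ij)) jk ij (ltn_eqF ij) /=.
have [->|ba] := eqVneq b a.
  by rewrite (ltn_eqF (ltnSn a)) ?andbF ?andbT; case: eqP; lia.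
have [->|ab] := eqVneq a b.+1.
  by rewrite ?andbF ?andbT; case: eqP; lia.
by rewrite ?andbF ?andbT; case: eqP; lia.
Qed.

Lemma edges_between_diag k ns N i :
  1 <= i <= k -> ns i < N -> edges_between k ns N i i = (ns i).-1.
Proof.
move=> ik iN; rewrite -subn1 -(@sum_nat_graph_indicator _ 1 _ succn (ltnW iN)).
  by apply: eq_bigr => a _; apply: eq_bigr => b _; rewrite G_rel_diag.
by move=> a /andP[_]; lia.
Qed.

Lemma edges_between_lt k ns N i j :
  0 < i -> i < j -> j <= k -> 0 < ns i <= ns j -> ns j < N ->
  edges_between k ns N i j = (ns i + ns j).-1.
Proof.
move=> i0 ij jk /andP[x0 xy] yN; have xN : ns i < N by apply: leq_trans yN.
rewrite /edges_between.
under eq_bigr => a _ do under eq_bigr => b _ do rewrite G_rel_lt ?x0 //.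
under eq_bigr => a _ do rewrite !big_split.
rewrite !big_split /= [X in _ + X + _]exchange_big [X in _ + X]exchange_big /=.
rewrite (@sum_nat_graph_indicator _ 1 _ id) ?(@sum_nat_graph_indicator _ 1 _ succn)
        ?(@sum_nat_graph_indicator _ (ns i) _ (fun=> ns i)) //; lia.
Qed.

Section EdgeCount.

Variables (k N : nat) (ns : nat -> nat).
Hypothesis ns_pos : forall i, 1 <= i <= k -> 0 < ns i.
Hypothesis ns_lt : forall i, 1 <= i <= k -> ns i < N.
Hypothesis ns_mono : forall i j, 1 <= i <= j -> j <= k -> ns i <= ns j.

Lemma sum_edges_between_last_row m :
  m < k -> \sum_(0 <= j < m.+2) edges_between k ns N m.+1 j = (ns m.+1).-1.
Proof.
move=> mk; rewrite big_nat_recr //= edges_between_diag ?ns_lt // big1_seq // => j.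
by rewrite mem_index_iota => /andP[_ /andP[_ jm]]; apply: edges_between_gt.
Qed.

Lemma sum_edges_between_last_col m :
  m < k -> \sum_(0 <= i < m.+1) edges_between k ns N i m.+1
           = \sum_(1 <= i < m.+1) ns i + m * (ns m.+1).-1.
Proof.
move=> mk; rewrite big_ltn // edges_between_row0 add0n.
rewrite (eq_big_nat _ _ (F2 := fun i => ns i + (ns m.+1).-1)) => [|i /andP[i0 im]].
  by rewrite big_split sum_nat_const_nat subn1.
have x0 : 0 < ns m.+1 by apply: ns_pos; exact: mk.
by rewrite edges_between_lt ?ns_pos ?ns_mono ?ns_lt //; lia.
Qed.

Lemma sum_edges_between m :
  m <= k -> \sum_(0 <= i < m.+1) \sum_(0 <= j < m.+1) edges_between k ns N i j + 'C(m.+1, 2)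
             = m * \sum_(1 <= i < m.+1) ns i.
Proof.
elim: m => [_|m IH mk]; first by rewrite !big_nat1 edges_between_row0.
rewrite big_nat_recr //= sum_edges_between_last_row //.
under eq_bigr => i _ do rewrite big_nat_recr //=.
rewrite big_split /= sum_edges_between_last_col // [in RHS]big_nat_recr //= binS bin1.
have := IH (ltnW mk); have : 0 < ns m.+1 by apply: ns_pos.
nia.
Qed.

End EdgeCount.

Theorem lemma4 (n k : nat) (ns : nat -> nat) :
  1 <= k -> k <= n ->
  (forall i, 1 <= i <= k -> 0 < ns i) ->
  (forall i, 1 <= i < k -> ns i <= ns i.+1) ->
  \sum_(1 <= i < k.+1) ns i = n ->
  #|G_edges k n ns| = k * n - 'C(k.+1, 2).
Proof.
move=> _ _ ns_pos ns_step sum_ns.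
have ns_lt i : 1 <= i <= k -> ns i < n.+1.
  move=> ik; rewrite ltnS -sum_ns (bigD1_seq i) ?mem_index_iota ?iota_uniq //=.
  exact: leq_addr.
have ns_mono i j : 1 <= i <= j -> j <= k -> ns i <= ns j.
  move=> /andP[i1 ij] jk.
  apply: (@homo_leq_in _ [pred l | 1 <= l <= k] ns leq leqnn (@leq_trans));
    rewrite ?inE /=; try lia.
  - by move=> l l' /andP[l1 _] /andP[_ l'k] l'' /andP[ll'' l''l']; rewrite inE; lia.
  - by move=> l /andP[l1 _] /andP[_ lk]; apply: ns_step; rewrite l1.
have := @sum_edges_between k n.+1 ns ns_pos ns_lt ns_mono k (leqnn k).
by rewrite sum_ns card_G_edges => <-; rewrite addnK.
Qed.
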